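(* Let $\{(\mathbf{x}^k,\mathbf{y}^k,\boldsymbol{\gamma}^k)\}$ be generated by the two-block linearized ADMM below, applied under the standing assumptions (i)–(iv) below. Then for every $k\ge1$, $$L_\beta(\mathbf{x}^{k+1},\mathbf{y}^{k+1},\boldsymbol{\gamma}^{k+1})-L_\beta(\mathbf{x}^{k+1},\mathbf{y}^{k+1},\boldsymbol{\gamma}^k)=\frac{1}{\beta}\|\boldsymbol{\gamma}^{k+1}-\boldsymbol{\gamma}^k\|^2\le C_2\|\mathbf{x}^{k+1}-\mathbf{x}^k\|^2+C_3\|\mathbf{y}^{k+1}-\mathbf{y}^k\|^2+C_4\|\mathbf{y}^k-\mathbf{y}^{k-1}\|^2,$$ where $L_w=L_g+L_h$, $\lambda_{\mathbf{B}^{\rm T}\mathbf{B}}$ is the smallest eigenvalue of $\mathbf{B}^{\rm T}\mathbf{B}$, $C_2=\frac{3L_w^2}{\beta\lambda_{\mathbf{B}^{\rm T}\mathbf{B}}}$, $C_3=\frac{3L_y^2}{\beta\lambda_{\mathbf{B}^{\rm T}\mathbf{B}}}$ and $C_4=\frac{3(L_w^2+L_y^2)}{\beta\lambda_{\mathbf{B}^{\rm T}\mathbf{B}}}$.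
   Context: Problem: minimize $g(\mathbf{x},\mathbf{y})+f(\mathbf{x})+h(\mathbf{y})$ s.t. $\mathbf{A}\mathbf{x}+\mathbf{B}\mathbf{y}=\mathbf{0}$, $\mathbf{x}\in\mathbb{R}^p$, $\mathbf{y}\in\mathbb{R}^q$, $\mathbf{A}\in\mathbb{R}^{n\times p}$, $\mathbf{B}\in\mathbb{R}^{n\times q}$. Standing assumptions: (i) $\nabla h$ is $L_h$-Lipschitz; (ii) $\nabla g$ is $L_g$-Lipschitz; (iii) $g+f+h$ is lower bounded on the feasible set $\{\mathbf{A}\mathbf{x}+\mathbf{B}\mathbf{y}=\mathbf{0}\}$ and coercive w.r.t. $\mathbf{y}$ over it; (iv) $\mathbf{B}$ has full column rank and $\mathrm{Im}(\mathbf{A})\subset\mathrm{Im}(\mathbf{B})$. $L_\beta(\mathbf{x},\mathbf{y},\boldsymbol{\gamma})=g(\mathbf{x},\mathbf{y})+f(\mathbf{x})+h(\mathbf{y})+\langle\boldsymbol{\gamma},\mathbf{A}\mathbf{x}+\mathbf{B}\mathbf{y}\rangle+\frac{\beta}{2}\|\mathbf{A}\mathbf{x}+\mathbf{B}\mathbf{y}\|^2$. Algorithm (parameters $L_x,L_y,\beta>0$): $\mathbf{x}^{k+1}\in\arg\min\bar f^k$, $\mathbf{y}^{k+1}=\arg\min\bar h^k$, $\boldsymbol{\gamma}^{k+1}=\boldsymbol{\gamma}^k+\beta(\mathbf{A}\mathbf{x}^{k+1}+\mathbf{B}\mathbf{y}^{k+1})$, where $\bar f^k(\mathbf{x})=f(\mathbf{x})+\langle\boldsymbol{\gamma}^k,\mathbf{A}\mathbf{x}\rangle+\frac{L_x}{2}\|\mathbf{x}-\mathbf{x}^k\|^2+\langle\mathbf{x}-\mathbf{x}^k,\nabla_{\mathbf{x}}g(\mathbf{x}^k,\mathbf{y}^k)+\beta\mathbf{A}^{\rm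 T}(\mathbf{A}\mathbf{x}^k+\mathbf{B}\mathbf{y}^k)\rangle$, $\bar h^k(\mathbf{y})=\langle\boldsymbol{\gamma}^k,\mathbf{B}\mathbf{y}\rangle+\frac{L_y}{2}\|\mathbf{y}-\mathbf{y}^k\|^2+\frac{\beta}{2}\|\mathbf{A}\mathbf{x}^{k+1}+\mathbf{B}\mathbf{y}\|^2+\langle\mathbf{y}-\mathbf{y}^k,\nabla_{\mathbf{y}}g(\mathbf{x}^{k+1},\mathbf{y}^k)+\nabla h(\mathbf{y}^k)\rangle$. *)

From HB Require Import structures.
From mathcomp Require Import all_boot all_order all_algebra.
From mathcomp Require Import all_classical all_reals all_analysis.
Set Implicit Arguments. Unset Strict Implicit. Unset Printing Implicit Defensive.
Import Order.TTheory GRing.Theory Num.Theory.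
Import numFieldNormedType.Exports.
Local Open Scope ring_scope.

Definition dotv {R : realType} {m : nat} (u v : 'cV[R]_m) : R :=
  \sum_(i < m) u i 0 * v i 0.
Definition enorm {R : realType} {m : nat} (v : 'cV[R]_m) : R :=
  Num.sqrt (dotv v v).

Definition is_gradient {R : realType} {m : nat} (G : 'cV[R]_m -> R^o)
  (gradG : 'cV[R]_m -> 'cV[R]_m) : Prop :=
  forall z, differentiable G z /\ forall v, 'd G z v = dotv (gradG z) v.

Definition lipschitz_grad {R : realType} {m : nat} (gradG : 'cV[R]_m -> 'cV[R]_m) (L : R) :=
  forall z1 z2, enorm (gradG z1 - gradG z2) <= L * enorm (z1 - z2).

Definition is_min_eigenvalue {R : realType} {m : nat} (M : 'M[R]_m) (lam : R) : Prop :=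
  eigenvalue M lam /\ forall a, eigenvalue M a -> lam <= a.

Definition Lbeta {R : realType} {n p q : nat}
  (g : 'cV[R]_(p + q) -> R) (f : 'cV[R]_p -> R) (h : 'cV[R]_q -> R)
  (A : 'M[R]_(n, p)) (B : 'M[R]_(n, q)) (beta : R)
  (x : 'cV[R]_p) (y : 'cV[R]_q) (gam : 'cV[R]_n) : R :=
  g (col_mx x y) + f x + h y + dotv gam (A *m x + B *m y)
  + beta / 2 * enorm (A *m x + B *m y) ^+ 2.

From HB Require Import structures.
From mathcomp Require Import all_boot all_order all_algebra.
From mathcomp Require Import all_classical all_reals all_analysis.
From mathcomp Require Import complex.
From mathcomp Require Import ring lra.

Set Implicit Arguments.
Unset Strict Implicit.
Unset Printing Implicit Defensive.

Import Order.TTheory GRing.Theory Num.Theory.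
Import numFieldNormedType.Exports.
Local Open Scope ring_scope.
Local Open Scope sesquilinear_scope.

(* The dual update gives gam^{k+1} - gam^k = beta (A x^{k+1} + B y^{k+1}), which
   yields the identity. The y-subproblem is a quadratic whose minimiser has zero
   gradient; combined with the dual update this reads
   B^T gam^{k+1} = - (L_y (y^{k+1} - y^k) + grad_y g(x^{k+1}, y^k) + grad h(y^k)).
   Subtracting two consecutive instances and applying the Lipschitz bounds gives
   |B^T (gam^{k+1} - gam^k)|^2 <= 3 (L_y^2 |dy^{k+1}|^2 + L_y^2 |dy^k|^2
   + L_w^2 (|dx^{k+1}|^2 + |dy^k|^2)). Since Im A is contained in Im B,
   gam^{k+1} - gam^k = B u for some u, and lam |B u|^2 <= |B^T B u|^2 follows
   from the spectral theorem for B^T B, whose smallest eigenvalue lam is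
   positive because B has full column rank. *)

Section EuclideanNorm.
Variables (R : realType) (m : nat).
Implicit Types u v w : 'cV[R]_m.

Lemma dotvE u v : dotv u v = (u^T *m v) 0 0.
Proof. by rewrite /dotv mxE; apply: eq_bigr => i _; rewrite mxE. Qed.

Lemma dotvC u v : dotv u v = dotv v u.
Proof. by rewrite /dotv; apply: eq_bigr => i _; rewrite mulrC. Qed.

Lemma dotvDl u v w : dotv (u + v) w = dotv u w + dotv v w.
Proof. by rewrite /dotv -big_split; apply: eq_bigr => i _; rewrite mxE mulrDl. Qed.

Lemma dotvDr u v w : dotv w (u + v) = dotv w u + dotv w v.
Proof. by rewrite dotvC dotvDl !(dotvC w). Qed.

Lemma dotvZl a u v : dotv (a *: u) v = a * dotv u v.
Proof. by rewrite /dotv mulr_sumr; apply: eq_bigr => i _; rewrite mxE mulrA. Qed.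

Lemma dotvZr a u v : dotv u (a *: v) = a * dotv u v.
Proof. by rewrite dotvC dotvZl dotvC. Qed.

Lemma dotvNl u v : dotv (- u) v = - dotv u v.
Proof. by rewrite -scaleN1r dotvZl mulN1r. Qed.

Lemma dotvNr u v : dotv u (- v) = - dotv u v.
Proof. by rewrite dotvC dotvNl dotvC. Qed.

Lemma dotvBl u v w : dotv (u - v) w = dotv u w - dotv v w.
Proof. by rewrite dotvDl dotvNl. Qed.

Lemma dotvBr u v w : dotv w (u - v) = dotv w u - dotv w v.
Proof. by rewrite dotvDr dotvNr. Qed.

Lemma dotv0l v : dotv 0 v = 0.
Proof. by rewrite /dotv big1 // => i _; rewrite mxE mul0r. Qed.

Lemma dotv0r v : dotv v 0 = 0.
Proof. by rewrite dotvC dotv0l. Qed.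

Lemma dotvv_ge0 v : 0 <= dotv v v.
Proof. by apply: sumr_ge0 => i _; rewrite -expr2 sqr_ge0. Qed.

Lemma dotvv_eq0 v : (dotv v v == 0) = (v == 0).
Proof.
apply/idP/eqP => [|->]; last by rewrite dotv0l.
rewrite psumr_eq0 => [/allP v0|i _]; last by rewrite -expr2 sqr_ge0.
apply/matrixP => i j; rewrite ord1 mxE.
by have := v0 i (mem_index_enum _); rewrite /= mulf_eq0 orbb => /eqP.
Qed.

Lemma enorm_ge0 v : 0 <= enorm v.
Proof. exact: sqrtr_ge0. Qed.

Lemma enorm_sqr v : enorm v ^+ 2 = dotv v v.
Proof. by rewrite sqr_sqrtr // dotvv_ge0. Qed.

Lemma enorm_eq0 v : (enorm v == 0) = (v == 0).
Proof. by rewrite sqrtr_eq0 -dotvv_eq0 eq_le dotvv_ge0 andbT. Qed.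

Lemma enormZ a v : enorm (a *: v) = `|a| * enorm v.
Proof. by rewrite /enorm dotvZl dotvZr mulrA -expr2 sqrtrM ?sqr_ge0 // sqrtr_sqr. Qed.

Lemma enormN v : enorm (- v) = enorm v.
Proof. by rewrite -scaleN1r enormZ normrN normr1 mul1r. Qed.

Lemma enormB u v : enorm (u - v) = enorm (v - u).
Proof. by rewrite -enormN opprB. Qed.

Lemma dotv_le_enorm u v : dotv u v <= enorm u * enorm v.
Proof.
have [->|u0] := eqVneq u 0; first by rewrite dotv0l mulr_ge0 ?enorm_ge0.
have [->|v0] := eqVneq v 0; first by rewrite dotv0r mulr_ge0 ?enorm_ge0.
have u_gt0 : 0 < enorm u by rewrite lt0r enorm_eq0 u0 enorm_ge0.
have v_gt0 : 0 < enorm v by rewrite lt0r enorm_eq0 v0 enorm_ge0.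
have uv_gt0 := mulr_gt0 u_gt0 v_gt0.
have := dotvv_ge0 (enorm v *: u - enorm u *: v).
rewrite !(dotvBl, dotvBr, dotvZl, dotvZr) [dotv v u]dotvC -!enorm_sqr.
nra.
Qed.

Lemma ler_enormD u v : enorm (u + v) <= enorm u + enorm v.
Proof.
rewrite -(@ler_pXn2r _ 2) ?nnegrE ?addr_ge0 ?enorm_ge0 //.
rewrite enorm_sqr !(dotvDl, dotvDr) [dotv v u]dotvC -!enorm_sqr.
have := dotv_le_enorm u v; lra.
Qed.

Lemma enormD3_sqr_le u v w :
  enorm (u + v + w) ^+ 2 <= 3 * (enorm u ^+ 2 + enorm v ^+ 2 + enorm w ^+ 2).
Proof.
have le_uvw : enorm (u + v + w) <= enorm u + enorm v + enorm w.
  by apply: le_trans (ler_enormD _ _) _; rewrite lerD2r ler_enormD.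
apply: le_trans (_ : _ <= (enorm u + enorm v + enorm w) ^+ 2) _.
  by rewrite ler_pXn2r ?nnegrE ?addr_ge0 ?enorm_ge0.
have := sqr_ge0 (enorm u - enorm v); have := sqr_ge0 (enorm v - enorm w).
have := sqr_ge0 (enorm u - enorm w); lra.
Qed.

Lemma lipschitz_grad_ge0 (G : 'cV[R]_m -> 'cV[R]_m) L :
  (0 < m)%N -> lipschitz_grad G L -> 0 <= L.
Proof.
move=> m_gt0 G_lip; pose e : 'cV[R]_m := const_mx 1.
have e_gt0 : 0 < enorm e.
  rewrite lt0r enorm_eq0 enorm_ge0 andbT; apply/eqP => /matrixP/(_ (Ordinal m_gt0) 0).
  by rewrite !mxE => /eqP; rewrite oner_eq0.
have := le_trans (enorm_ge0 _) (G_lip e 0).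
by rewrite subr0 pmulr_lge0.
Qed.

End EuclideanNorm.

Lemma dotv_mulmx (R : realType) k m (M : 'M[R]_(k, m)) u v :
  dotv u (M *m v) = dotv (M^T *m u) v.
Proof. by rewrite !dotvE trmx_mul trmxK mulmxA. Qed.

Lemma enorm_col_mx_sqr (R : realType) p q (u : 'cV[R]_p) (v : 'cV[R]_q) :
  enorm (col_mx u v) ^+ 2 = enorm u ^+ 2 + enorm v ^+ 2.
Proof.
rewrite !enorm_sqr /dotv big_split_ord /=.
by congr (_ + _); apply: eq_bigr => i _; rewrite ?col_mxEu ?col_mxEd.
Qed.

Lemma enorm_dsubmx_le (R : realType) p q (v : 'cV[R]_(p + q)) :
  enorm (dsubmx v) <= enorm v.
Proof.
rewrite -(@ler_pXn2r _ 2) ?nnegrE ?enorm_ge0 //.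
by rewrite -{2}(vsubmxK v) enorm_col_mx_sqr lerDr sqr_ge0.
Qed.

Lemma quadratic_ge0_lin_eq0 (R : realFieldType) (a b : R) :
  (forall s, 0 <= s * a + s ^+ 2 * b) -> a = 0.
Proof.
pose e := `|b| + 1; have e_gt0 : 0 < e by rewrite ltr_wpDl.
have b_lt_e : b < e by rewrite /e; have := ler_norm b; lra.
move=> /(_ (- a / e)).
have -> : - a / e * a + (- a / e) ^+ 2 * b = a ^+ 2 * (b - e) / e ^+ 2.
  by field; rewrite gt_eqF.
rewrite pmulr_lge0 ?invr_gt0 ?exprn_gt0 // => ge0.
apply/eqP; rewrite -sqrf_eq0 eq_le sqr_ge0 andbT; nra.
Qed.

Lemma quadratic_minimizer_grad_eq0 (R : realType) n q (B : 'M[R]_(n, q))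
    (gam a : 'cV[R]_n) (y0 y1 c : 'cV[R]_q) (Ly beta : R) :
  let Q v := dotv gam (B *m v) + Ly / 2 * enorm (v - y0) ^+ 2
             + beta / 2 * enorm (a + B *m v) ^+ 2 + dotv (v - y0) c in
  (forall z, Q y1 <= Q z) ->
  B^T *m gam + Ly *: (y1 - y0) + beta *: (B^T *m (a + B *m y1)) + c = 0.
Proof.
move=> Q Q_min; set G := _ + c; apply/eqP; rewrite -dotvv_eq0; apply/eqP.
have GG : dotv G G = dotv gam (B *m G) + Ly * dotv (y1 - y0) G
                     + beta * dotv (a + B *m y1) (B *m G) + dotv c G.
  by rewrite {1}/G !(dotvDl, dotvZl) !dotv_mulmx !mulmxDr !dotvDl.
(* Q (y1 + s G) - Q y1 = s |G|^2 + s^2 (Ly/2 |G|^2 + beta/2 |B G|^2). *)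
apply: (@quadratic_ge0_lin_eq0 _ _
  (Ly / 2 * dotv G G + beta / 2 * dotv (B *m G) (B *m G))) => s.
have := Q_min (y1 + s *: G); rewrite /Q.
have -> : y1 + s *: G - y0 = (y1 - y0) + s *: G by rewrite addrAC.
have -> : a + B *m (y1 + s *: G) = (a + B *m y1) + s *: (B *m G).
  by rewrite mulmxDr -scalemxAr addrA.
rewrite mulmxDr -scalemxAr.
move: GG; set d := y1 - y0; set r := a + B *m y1; clearbody G d r => GG.
rewrite !enorm_sqr !(dotvDl, dotvDr, dotvZl, dotvZr) GG.
rewrite [dotv G d]dotvC [dotv (B *m G) r]dotvC [dotv G c]dotvC.
lra.
Qed.

Lemma Lbeta_dual_step (R : realType) n p q
    (g : 'cV[R]_(p + q) -> R) (f : 'cV[R]_p -> R) (h : 'cV[R]_q -> R)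
    (A : 'M[R]_(n, p)) (B : 'M[R]_(n, q)) beta x y (gam gam' : 'cV[R]_n) :
  Lbeta g f h A B beta x y gam' - Lbeta g f h A B beta x y gam
  = dotv (gam' - gam) (A *m x + B *m y).
Proof. rewrite /Lbeta dotvBl; lra. Qed.

Lemma eigenvalue_dim_gt0 (F : fieldType) m (M : 'M[F]_m) a :
  eigenvalue M a -> (0 < m)%N.
Proof.
move=> /eigenvalueP[v _]; case: m M v => // M v.
by rewrite thinmx0 eqxx.
Qed.

Lemma eigenvalue_trmx_mul_gt0 (R : realType) n q (B : 'M[R]_(n, q)) a :
  \rank B = q -> eigenvalue (B^T *m B) a -> 0 < a.
Proof.
move=> rankB /eigenvalueP[v vBB v_neq0].
have Bv_neq0 : B *m v^T != 0.
  rewrite -trmx_eq0 trmx_mul trmxK mulmx_free_eq0 //.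
  by rewrite /row_free mxrank_tr rankB.
have v_gt0 : 0 < (v *m v^T) 0 0.
  by rewrite -[v in v *m _]trmxK -dotvE lt0r dotvv_eq0 trmx_eq0 v_neq0 dotvv_ge0.
have : 0 < dotv (B *m v^T) (B *m v^T) by rewrite lt0r dotvv_eq0 Bv_neq0 dotvv_ge0.
rewrite dotv_mulmx dotvE !trmx_mul !trmxK -mulmxA vBB -scalemxAl mxE.
by rewrite pmulr_lgt0.
Qed.

Lemma diag_mx_form_ge (C : numClosedFieldType) n (d : 'rV[C]_n) (a : C)
    (z : 'rV[C]_n) :
  (forall j, a <= d 0 j) ->
  a * (z *m (z ^t*)) 0 0 <= (z *m diag_mx d *m (z ^t*)) 0 0.
Proof.
move=> a_le; rewrite mul_mx_diag !mxE mulr_sumr; apply: ler_sum => j _.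
rewrite !mxE mulrAC [a * _]mulrC.
by apply: ler_wpM2l; [exact: mul_conjC_ge0 | exact: a_le].
Qed.

(* The spectral theorem of the library is stated over a closed field, hence the
   detour through R[i]. *)
Section Rayleigh.
Variables (R : rcfType) (n : nat) (M : 'M[R]_n) (lam : R).
Hypotheses (M_sym : M^T = M) (lam_le : forall a, eigenvalue M a -> lam <= a).

Local Notation toC := (real_complex R).
Local Notation Mc := (map_mx toC M).
Local Notation P := (spectralmx Mc).
Local Notation d := (spectral_diag Mc).

Lemma complexified_hermsym : Mc \is hermsymmx.
Proof.
apply: realsym_hermsym; last by apply/mxOverP => i j; rewrite mxE complex_real.
by rewrite qualifE /= expr0 scale1r map_mx_id // map_trmx M_sym.
Qed.

Lemma complexified_spectral : Mc = P ^t* *m diag_mx d *m P.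
Proof.
rewrite -invmx_unitary ?spectral_unitarymx //.
exact/orthomx_spectralP/hermitian_normalmx/complexified_hermsym.
Qed.

Lemma spectral_diag_ge i : toC lam <= d 0 i.
Proof.
have d_real : d 0 i \is Num.real.
  exact: (mxOverP (hermitian_spectral_diag_real complexified_hermsym)).
rewrite -(RRe_real d_real) lecR; apply: lam_le.
suff : eigenvalue Mc (d 0 i) by rewrite -{1}(RRe_real d_real) eigenvalue_map.
apply/eigenvalueP; exists (row i P).
  have PM : P *m Mc = diag_mx d *m P.
    rewrite [X in _ *m X = _]complexified_spectral !mulmxA.
    by rewrite (unitarymxP (spectral_unitarymx Mc)) mul1mx.
  by rewrite -row_mul PM mul_diag_mx; apply/rowP => j; rewrite !mxE.
rewrite rowE mulmx_free_eq0 ?row_free_unit ?spectral_unit //.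
by apply/eqP => /matrixP/(_ 0 i)/eqP; rewrite !mxE !eqxx oner_eq0.
Qed.

Lemma map_real_complexC k l (A : 'M[R]_(k, l)) :
  map_mx Num.conj (map_mx toC A) = map_mx toC A.
Proof. by apply/matrixP => i j; rewrite !mxE conj_Creal // complex_real. Qed.

Lemma rayleigh_ge (v : 'rV[R]_n) : lam * (v *m v^T) 0 0 <= (v *m M *m v^T) 0 0.
Proof.
have toC00 (A : 'M[R]_1) : toC (A 0 0) = (map_mx toC A) 0 0 by rewrite mxE.
rewrite -lecR rmorphM /= !toC00 !map_mxM -(map_real_complexC v^T) -map_trmx.
rewrite complexified_spectral.
set vc := map_mx toC v; set z := vc *m P^t*.
have zC : z^t* = P *m vc^t* by rewrite /z trmx_mul map_mxM trmxCK.
have -> : vc *m vc^t* = z *m z^t*.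
  by rewrite zC /z mulmxA mulmxKtV ?spectral_unitarymx.
have -> : vc *m (P^t* *m diag_mx d *m P) *m vc^t* = z *m diag_mx d *m z^t*.
  by rewrite zC /z !mulmxA.
exact/diag_mx_form_ge/spectral_diag_ge.
Qed.

End Rayleigh.

Lemma min_eigenvalue_trmx_mul_le (R : realType) n q (B : 'M[R]_(n, q)) lam
    (u : 'cV[R]_q) :
  0 <= lam -> (forall a, eigenvalue (B^T *m B) a -> lam <= a) ->
  lam * enorm (B *m u) ^+ 2 <= enorm (B^T *m (B *m u)) ^+ 2.
Proof.
move=> lam_ge0 lam_le; rewrite mulmxA; set M := B^T *m B.
have M_sym : M^T = M by rewrite /M trmx_mul trmxK.
have uMu : lam * dotv u u <= dotv u (M *m u).
  by have := rayleigh_ge M_sym lam_le u^T; rewrite trmxK -mulmxA -!dotvE.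
have BuBu : enorm (B *m u) ^+ 2 = dotv u (M *m u).
  by rewrite enorm_sqr dotv_mulmx dotvC mulmxA.
have := dotvv_ge0 (M *m u - lam *: u).
rewrite BuBu enorm_sqr !(dotvBl, dotvBr, dotvZl, dotvZr) [dotv (M *m u) u]dotvC.
nra.
Qed.

Section LinearizedADMM.
Variables (R : realType) (n p q : nat) (A : 'M[R]_(n, p)) (B : 'M[R]_(n, q)).
Variables (gradg : 'cV[R]_(p + q) -> 'cV[R]_(p + q)) (gradh : 'cV[R]_q -> 'cV[R]_q).
Variables (Lg Lh Ly beta : R).
Variables (x : nat -> 'cV[R]_p) (y : nat -> 'cV[R]_q) (gam : nat -> 'cV[R]_n).
Hypotheses (gradg_lip : lipschitz_grad gradg Lg) (gradh_lip : lipschitz_grad gradh Lh).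
Hypotheses (Lg_ge0 : 0 <= Lg) (Lh_ge0 : 0 <= Lh).
Hypothesis ystep_min : forall k (z : 'cV[R]_q),
  let hbar := fun v : 'cV[R]_q =>
    dotv (gam k) (B *m v) + Ly / 2 * enorm (v - y k) ^+ 2
    + beta / 2 * enorm (A *m x k.+1 + B *m v) ^+ 2
    + dotv (v - y k) (dsubmx (gradg (col_mx (x k.+1) (y k))) + gradh (y k)) in
  hbar (y k.+1) <= hbar z.
Hypothesis dual_update : forall k,
  gam k.+1 = gam k + beta *: (A *m x k.+1 + B *m y k.+1).

Definition grad_y k := dsubmx (gradg (col_mx (x k.+1) (y k))) + gradh (y k).

Lemma gam_succB k : gam k.+1 - gam k = beta *: (A *m x k.+1 + B *m y k.+1).
Proof. by rewrite dual_update addrC addKr. Qed.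

Lemma trmx_gam_succ k : B^T *m gam k.+1 = - (Ly *: (y k.+1 - y k) + grad_y k).
Proof.
rewrite dual_update mulmxDr -scalemxAr; apply/eqP.
rewrite -addr_eq0 -addrACA addrA; apply/eqP.
exact: quadratic_minimizer_grad_eq0 (ystep_min k).
Qed.

Lemma grad_y_sub_sqr_le k :
  enorm (grad_y k - grad_y k.+1) ^+ 2
  <= (Lg + Lh) ^+ 2 * (enorm (x k.+2 - x k.+1) ^+ 2 + enorm (y k.+1 - y k) ^+ 2).
Proof.
set e := enorm (col_mx (x k.+1 - x k.+2) (y k - y k.+1)).
have e_sqr : e ^+ 2 = enorm (x k.+2 - x k.+1) ^+ 2 + enorm (y k.+1 - y k) ^+ 2.
  by rewrite enorm_col_mx_sqr (enormB (x k.+1)) (enormB (y k)).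
rewrite -e_sqr -exprMn ler_pXn2r ?nnegrE ?mulr_ge0 ?addr_ge0 ?enorm_ge0 //.
rewrite /grad_y opprD addrACA -raddfB mulrDl.
apply: le_trans (ler_enormD _ _) _; apply: lerD.
  apply: le_trans (enorm_dsubmx_le _) _; apply: le_trans (gradg_lip _ _) _.
  by rewrite opp_col_mx add_col_mx.
apply: le_trans (gradh_lip _ _) _; apply: ler_wpM2l => //.
by rewrite -[y k - _](col_mxKd (x k.+1 - x k.+2)) enorm_dsubmx_le.
Qed.

Lemma trmx_gam_sub_sqr_le k :
  enorm (B^T *m (gam k.+2 - gam k.+1)) ^+ 2
  <= 3 * (Ly ^+ 2 * enorm (y k.+2 - y k.+1) ^+ 2
          + Ly ^+ 2 * enorm (y k.+1 - y k) ^+ 2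
          + (Lg + Lh) ^+ 2 * (enorm (x k.+2 - x k.+1) ^+ 2
                              + enorm (y k.+1 - y k) ^+ 2)).
Proof.
have -> : B^T *m (gam k.+2 - gam k.+1) = - (Ly *: (y k.+2 - y k.+1))
    + Ly *: (y k.+1 - y k) + (grad_y k - grad_y k.+1).
  by rewrite mulmxBr !trmx_gam_succ opprK opprD addrACA [- grad_y _ + _]addrC.
apply: le_trans (enormD3_sqr_le _ _ _) _.
rewrite enormN !enormZ !exprMn real_normK ?num_real // ler_pM2l // lerD2l.
exact: grad_y_sub_sqr_le.
Qed.

End LinearizedADMM.

Theorem lemma7 (R : realType) (n p q : nat)
  (A : 'M[R]_(n, p)) (B : 'M[R]_(n, q))
  (g : 'cV[R]_(p + q) -> R) (gradg : 'cV[R]_(p + q) -> 'cV[R]_(p + q))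
  (f : 'cV[R]_p -> R)
  (h : 'cV[R]_q -> R) (gradh : 'cV[R]_q -> 'cV[R]_q)
  (Lg Lh Lx Ly beta lam : R)
  (x : nat -> 'cV[R]_p) (y : nat -> 'cV[R]_q) (gam : nat -> 'cV[R]_n) :
  (* (i) *)
  is_gradient h gradh -> lipschitz_grad gradh Lh ->
  (* (ii) *)
  is_gradient g gradg -> lipschitz_grad gradg Lg ->
  (* (iii) *)
  (exists c : R, forall (u : 'cV[R]_p) (v : 'cV[R]_q), A *m u + B *m v = 0 ->
      c <= g (col_mx u v) + f u + h v) ->
  (forall M : R, exists r : R, forall (u : 'cV[R]_p) (v : 'cV[R]_q),
      A *m u + B *m v = 0 -> r < enorm v -> M < g (col_mx u v) + f u + h v) ->
  (* (iv) *)
  \rank B = q ->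
  (forall u : 'cV[R]_p, exists v : 'cV[R]_q, A *m u = B *m v) ->
  (* parameters *)
  0 < Lx -> 0 < Ly -> 0 < beta ->
  is_min_eigenvalue (B^T *m B) lam ->
  (* the algorithm *)
  (forall k (z : 'cV[R]_p),
     let fbar := fun u : 'cV[R]_p =>
       f u + dotv (gam k) (A *m u) + Lx / 2 * enorm (u - x k) ^+ 2
       + dotv (u - x k) (usubmx (gradg (col_mx (x k) (y k)))
                         + beta *: (A^T *m (A *m x k + B *m y k))) in
     fbar (x k.+1) <= fbar z) ->
  (forall k (z : 'cV[R]_q),
     let hbar := fun v : 'cV[R]_q =>
       dotv (gam k) (B *m v) + Ly / 2 * enorm (v - y k) ^+ 2
       + beta / 2 * enorm (A *m x k.+1 + B *m v) ^+ 2
       + dotv (v - y k) (dsubmx (gradg (col_mx (x k.+1) (y k))) + gradh (y k)) in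
     hbar (y k.+1) <= hbar z) ->
  (forall k, gam k.+1 = gam k + beta *: (A *m x k.+1 + B *m y k.+1)) ->
  forall k : nat, (1 <= k)%N ->
  let Lw := Lg + Lh in
  let C2 := 3 * Lw ^+ 2 / (beta * lam) in
  let C3 := 3 * Ly ^+ 2 / (beta * lam) in
  let C4 := 3 * (Lw ^+ 2 + Ly ^+ 2) / (beta * lam) in
  Lbeta g f h A B beta (x k.+1) (y k.+1) (gam k.+1)
    - Lbeta g f h A B beta (x k.+1) (y k.+1) (gam k)
  = beta^-1 * enorm (gam k.+1 - gam k) ^+ 2
  /\ beta^-1 * enorm (gam k.+1 - gam k) ^+ 2
     <= C2 * enorm (x k.+1 - x k) ^+ 2 + C3 * enorm (y k.+1 - y k) ^+ 2
        + C4 * enorm (y k - y k.-1) ^+ 2.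
Proof.
move=> _ gradh_lip _ gradg_lip _ _ rankB ImAB _ _ beta_gt0 [lam_eig lam_min] _
  ystep_min dual_update k k_ge1 Lw C2 C3 C4.
split.
  rewrite Lbeta_dual_step (gam_succB dual_update) enorm_sqr !(dotvZl, dotvZr).
  by field; rewrite gt_eqF.
case: k k_ge1 => // m _ /=.
have q_gt0 := eigenvalue_dim_gt0 lam_eig.
have Lh_ge0 := lipschitz_grad_ge0 q_gt0 gradh_lip.
have Lg_ge0 : 0 <= Lg by apply: lipschitz_grad_ge0 gradg_lip; rewrite addn_gt0 q_gt0 orbT.
have lam_gt0 := eigenvalue_trmx_mul_gt0 rankB lam_eig.
have [w Aw] := ImAB (x m.+2).
have gam_sub_ImB : gam m.+2 - gam m.+1 = B *m (beta *: (w + y m.+2)).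
  by rewrite (gam_succB dual_update) Aw -mulmxDr scalemxAr.
have lamE : lam * enorm (gam m.+2 - gam m.+1) ^+ 2
             <= enorm (B^T *m (gam m.+2 - gam m.+1)) ^+ 2.
  by rewrite gam_sub_ImB; exact: min_eigenvalue_trmx_mul_le (ltW lam_gt0) lam_min.
have le_E := le_trans lamE
  (trmx_gam_sub_sqr_le gradg_lip gradh_lip Lg_ge0 Lh_ge0 ystep_min dual_update m).
have bl_gt0 := mulr_gt0 beta_gt0 lam_gt0.
rewrite -(ler_pM2l bl_gt0) mulrA [_ * beta^-1]mulrAC mulfV ?gt_eqF // mul1r.
apply: (le_trans le_E); rewrite le_eqVlt; apply/predU1P; left.
by rewrite /C2 /C3 /C4 /Lw; field; rewrite !gt_eqF.
Qed.
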